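(* Let $q$ be a prime power and $k\ge3$, $u\ge2$, $h\ge1$ integers. Let $U_1,\dots,U_h$ be $u$-dimensional subspaces of $\mathbf F_q^k$ with $U_i\cap U_j=\{0\}$ for $i\ne j$, and assume $q^k-q^{k-1}>h(q^u-1)$. Let $U$ be the set of nonzero vectors of $\mathbf F_q^k$ not in $U_1\cup\dots\cup U_h$, let $\widetilde G$ be a $k\times\frac{|U|}{q-1}$ matrix whose columns consist of exactly one representative of each class $\{\lambda\mathbf v:\lambda\in\mathbf F_q^*\}$, $\mathbf v\in U$, and let $\mathbf C$ be the linear code with generator matrix $\widetilde G$. Then $\mathbf C$ is a linear $\big[\frac{(q^k-1)-h(q^u-1)}{q-1},\,k,\,d\big]_q$ code with $d\ge q^{k-1}-hq^{u-1}$, and $\mathbf C$ has at most $h+1$ distinct nonzero weights. *)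

From HB Require Import structures.
From mathcomp Require Import all_boot all_order all_algebra all_field.
Set Implicit Arguments. Unset Strict Implicit. Unset Printing Implicit Defensive.
Import GRing.Theory.
Local Open Scope ring_scope.

Definition wt (F : fieldType) (n : nat) (c : 'rV[F]_n) : nat :=
  #|[set j : 'I_n | c 0 j != 0]|.

Definition colv (F : fieldType) (k n : nat) (G : 'M[F]_(k, n)) (j : 'I_n) : 'rV[F]_k :=
  (col j G)^T.

Definition proportional (F : fieldType) (k : nat) (v w : 'rV[F]_k) : Prop :=
  exists2 l : F, l != 0 & w = l *: v.

Definition inU (F : fieldType) (k h : nat) (Us : 'I_h -> {vspace 'rV[F]_k})
  (v : 'rV[F]_k) : Prop :=
  v != 0 /\ forall i, v \notin Us i.

Definition rep_matrix (F : fieldType) (k h n : nat)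
  (Us : 'I_h -> {vspace 'rV[F]_k}) (G : 'M[F]_(k, n)) : Prop :=
  [/\ forall j, inU Us (colv G j),
      forall j1 j2, j1 != j2 -> ~ proportional (colv G j1) (colv G j2)
    & forall v, inU Us v -> exists j, proportional v (colv G j)].

From HB Require Import structures.
From mathcomp Require Import all_boot all_order all_algebra all_field.
Set Implicit Arguments. Unset Strict Implicit. Unset Printing Implicit Defensive.
Import GRing.Theory.
Local Open Scope ring_scope.

(* For x <> 0 the weight of x G counts the columns v with x.v <> 0, i.e. the
   points of U off the hyperplane x^perp.  Counting the nonzero vectors off
   x^perp in two ways: in F^k there are (q-1)q^(k-1) of them, while each U_i
   contains either none or (q-1)q^(u-1) of them (as U_i lies in x^perp or not)
   and, the U_i meeting only in 0, the rest lie in U, in classes of size q-1.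
   Hence wt(x G) = q^(k-1) - m q^(u-1) for some m <= h: at most h+1 values,
   all positive by the bound on h, so G has full rank.  The length is the same
   count with x.v <> 0 replaced by v <> 0. *)

Lemma subn_expn_pred (q a : nat) :
  (0 < a)%N -> (q ^ a - q ^ a.-1 = q.-1 * q ^ a.-1)%N.
Proof. by case: a => // a _; rewrite /= expnS -subn1 mulnBl mul1n. Qed.

Lemma ltn_mul_expn_pred (q a b m h : nat) :
  (0 < a)%N -> (m <= h)%N -> (h * (q ^ a - 1) < q ^ b - q ^ b.-1)%N ->
  (m * q ^ a.-1 < q ^ b.-1)%N.
Proof.
case: b => [|b] a_gt0 le_mh; first by rewrite subnn ltn0.
rewrite subn_expn_pred //= => hb.
have q_gt0 : (0 < q)%N by case: q hb => //; rewrite muln0 ltn0.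
have le_lhs : (m * (q.-1 * q ^ a.-1) <= h * (q ^ a - 1))%N.
  by rewrite -subn_expn_pred // leq_mul // leq_sub2l // expn_gt0 q_gt0.
by have := leq_ltn_trans le_lhs hb; rewrite mulnCA ltn_mul2l => /andP[].
Qed.

Lemma wt_mulmx (F : fieldType) (k n : nat) (G : 'M[F]_(k, n)) (x : 'rV[F]_k) :
  wt (x *m G) = #|[set j | colv G j *m x^T != 0]|.
Proof.
have mx11_eq0 (A : 'M[F]_1) : (A == 0) = (A 0 0 == 0).
  by apply/eqP/eqP => [-> | A0]; [rewrite mxE | apply/rowP => j; rewrite ord1 mxE].
apply: eq_card => j; rewrite !inE mx11_eq0 !mxE; congr (_ != 0).
by apply: eq_bigr => i _; rewrite /colv !mxE mulrC.
Qed.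

Lemma wt0 (F : fieldType) (n : nat) : wt (0 : 'rV[F]_n) = 0%N.
Proof. by apply: eq_card0 => j; rewrite !inE mxE eqxx. Qed.

Section LinearForm.
Variables (F : finFieldType) (k : nat) (wT : vectType F).
Implicit Types (f : 'Hom('rV[F]_k, wT)) (W : {vspace 'rV[F]_k}).

Lemma card_memv_lfun_neq0 f W :
  #|[set v in W | f v != 0]| = (#|F| ^ \dim W - #|F| ^ \dim (W :&: lker f))%N.
Proof.
rewrite -!card_vspace.
have -> : #|(W :&: lker f)%VS| = #|[predI W & lker f]|.
  by apply: eq_card => v; rewrite inE memv_cap.
rewrite -(cardID (lker f) W) addKn.
by apply: eq_card => v; rewrite !inE memv_ker andbC.
Qed.

Lemma card_lform_neq0 f W : \dim {:wT} = 1%N ->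
  let c := #|[set v in W | f v != 0]| in
  c = 0%N \/ c = (#|F|.-1 * #|F| ^ (\dim W).-1)%N.
Proof.
move=> dim_wT c; rewrite /c card_memv_lfun_neq0 -(limg_ker_dim f W).
have : (\dim (f @: W) <= 1)%N by rewrite -[X in (_ <= X)%N]dim_wT dimvS ?subvf.
case: (\dim (f @: W)) => [|[|//]] _; first by left; rewrite addn0 subnn.
by right; rewrite addn1 subn_expn_pred.
Qed.

End LinearForm.

Section DisjointSubspaces.
Variables (F : finFieldType) (k h : nat) (Us : 'I_h -> {vspace 'rV[F]_k}).
Hypothesis Us_disj : forall i j, i != j -> (Us i :&: Us j)%VS = 0%VS.

Lemma sum_memv_disjoint v : v != 0 ->
  (\sum_i (v \in Us i) = [exists i, v \in Us i])%N.
Proof.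
move=> v_neq0; case: existsP => [[i vUi] | vU]; last first.
  by rewrite big1 // => i _; case: (boolP (v \in Us i)) => // vUi; case: vU; exists i.
rewrite (bigD1 i) //= vUi big1 // => j ji; case: (boolP (v \in Us j)) => // vUj.
by move: v_neq0; rewrite -memv0 -(Us_disj ji) memv_cap vUj vUi.
Qed.

Lemma card_split_subspaces (P : pred 'rV[F]_k) : ~~ P 0 ->
  #|[set v | P v]| = (#|[set v | P v && [forall i, v \notin Us i]]|
                      + \sum_i #|[set v | P v && (v \in Us i)]|)%N.
Proof.
have card_indicator (Q : pred 'rV[F]_k) : #|[set v | Q v]| = (\sum_v Q v)%N.
  by rewrite -sum1dep_card big_mkcond; apply: eq_bigr => v _; case: (Q v).
move=> P0; rewrite !card_indicator.
under [X in (_ + X)%N]eq_bigr do rewrite card_indicator.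
rewrite exchange_big -big_split; apply: eq_bigr => v _ /=.
case Pv: (P v); last by rewrite big1.
have v_neq0 : v != 0 by apply: contraNneq P0 => <-; rewrite Pv.
by rewrite sum_memv_disjoint // -negb_exists; case: [exists i, _].
Qed.

Section RepresentativeMatrix.
Variables (n : nat) (G : 'M[F]_(k, n)).
Hypothesis G_rep : rep_matrix Us G.

Lemma card_rep_classes (P : pred 'rV[F]_k) :
  ~~ P 0 -> (forall a v, a != 0 -> P (a *: v) = P v) ->
  #|[set v | P v && [forall i, v \notin Us i]]| =
  (#|F|.-1 * #|[set j | P (colv G j)]|)%N.
Proof.
move=> P0 P_scale; case: G_rep => col_inU col_nprop inU_col.
pose scale_col (ja : 'I_n * F) := ja.2 *: colv G ja.1.
have -> : [set v | P v && [forall i, v \notin Us i]] =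
          scale_col @: setX [set j | P (colv G j)] [set~ 0].
  apply/setP => v; rewrite inE; apply/andP/imsetP => [[Pv /forallP vU] | [[j a]]].
    have v_neq0 : v != 0 by apply: contraNneq P0 => <-.
    have [j [a a_neq0 colE]] := inU_col v (conj v_neq0 vU).
    exists (j, a^-1); first by rewrite in_setX !inE /= colE P_scale // Pv invr_eq0.
    by rewrite /scale_col /= colE scalerA mulVf // scale1r.
  rewrite in_setX !inE /= => /andP[Pj a_neq0] ->; have [_ colU] := col_inU j.
  rewrite /scale_col /= P_scale //; split=> //; apply/forallP => i.
  by rewrite rpredZeq (negbTE a_neq0) colU.
rewrite card_in_imset ?cardsX ?cardsC1 1?mulnC //.
move=> [j1 a1] [j2 a2]; rewrite !in_setX !inE /= => /andP[_ a1_neq0] /andP[_ a2_neq0].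
rewrite /scale_col /= => colE.
have j12 : j1 = j2.
  case: (eqVneq j1 j2) => // /col_nprop[]; exists (a2^-1 * a1).
    by rewrite mulf_neq0 ?invr_eq0.
  by rewrite -scalerA colE scalerA mulVf // scale1r.
subst j2; have [col_neq0 _] := col_inU j1; congr pair.
move/eqP: colE; rewrite -subr_eq0 -scalerBl scaler_eq0 (negbTE col_neq0) orbF.
by rewrite subr_eq0 => /eqP.
Qed.

Lemma card_pred_rep_matrix (P : pred 'rV[F]_k) :
  ~~ P 0 -> (forall a v, a != 0 -> P (a *: v) = P v) ->
  #|[set v | P v]| = (#|F|.-1 * #|[set j | P (colv G j)]|
                      + \sum_i #|[set v | P v && (v \in Us i)]|)%N.
Proof. by move=> P0 P_scale; rewrite (card_split_subspaces P0) card_rep_classes. Qed.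

Variable u : nat.
Hypothesis Us_dim : forall i, \dim (Us i) = u.

Lemma rep_matrix_length : ((#|F| ^ k).-1 = #|F|.-1 * n + h * (#|F| ^ u).-1)%N.
Proof.
have [col_inU _ _] := G_rep.
pose P (v : 'rV[F]_k) := v != 0.
have P0 : ~~ P 0 by rewrite /P eqxx.
have P_scale a v : a != 0 -> P (a *: v) = P v.
  by move=> a_neq0; rewrite /P scaler_eq0 (negbTE a_neq0).
have := card_pred_rep_matrix P0 P_scale.
have -> : [set v | P v] = [set~ 0] by apply/setP => v; rewrite !inE.
rewrite cardsC1 card_mx mul1n => ->.
have -> : [set j | P (colv G j)] = setT.
  by apply/setP => j; rewrite !inE; case: (col_inU j).
rewrite cardsT card_ord; congr (_ + _)%N.
rewrite -[in RHS](card_ord h) -sum_nat_const; apply: eq_bigr => i _.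
rewrite -(Us_dim i) -card_vspace (cardD1 0 (Us i)) mem0v add1n /=.
by apply: eq_card => v; rewrite !inE.
Qed.

Lemma wt_rep_matrix (x : 'rV[F]_k) : x != 0 ->
  exists2 m, (m <= h)%N & (wt (x *m G) + m * #|F| ^ u.-1 = #|F| ^ k.-1)%N.
Proof.
move=> x_neq0; have q_gt1 : (1 < #|F|)%N := finNzRing_gt1 F.
have q1_gt0 : (0 < #|F|.-1)%N by rewrite -subn1 subn_gt0.
pose f : 'Hom('rV[F]_k, 'M[F]_1) := linfun (mulmxr x^T).
have fE v : f v = v *m x^T by rewrite lfunE.
have dim_f : \dim {:'M[F]_1} = 1%N by rewrite dimvf /dim /= mul1n.
pose P (v : 'rV[F]_k) := f v != 0.
have P0 : ~~ P 0 by rewrite /P linear0 eqxx.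
have P_scale a v : a != 0 -> P (a *: v) = P v.
  by move=> a_neq0; rewrite /P linearZ scaler_eq0 (negbTE a_neq0).
have := card_pred_rep_matrix P0 P_scale.
have -> : #|[set j | P (colv G j)]| = wt (x *m G).
  by rewrite wt_mulmx; apply: eq_card => j; rewrite !inE /P fE.
have -> : #|[set v | P v]| = (#|F|.-1 * #|F| ^ k.-1)%N.
  have := card_lform_neq0 f fullv dim_f; rewrite dimvf /dim /= mul1n.
  case=> [f_eq0 | <-]; last by apply: eq_card => v; rewrite !inE memvf.
  case/negP: x_neq0; rewrite -trmx_eq0; apply/mulmxP => v; rewrite mulmx0 -fE.
  by move/card0_eq/(_ v): f_eq0; rewrite !inE memvf => /negbFE/eqP.
have d_gt0 : (0 < #|F|.-1 * #|F| ^ u.-1)%N by rewrite muln_gt0 q1_gt0 expn_gt0 ltnW.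
have Us_count i : #|[set v | P v && (v \in Us i)]| =
    ((#|[set v in Us i | f v != 0%R]| != 0%N) * (#|F|.-1 * #|F| ^ u.-1))%N.
  have -> : [set v | P v && (v \in Us i)] = [set v in Us i | f v != 0].
    by apply/setP => v; rewrite !inE andbC.
  by case: (card_lform_neq0 f (Us i) dim_f) => ->; rewrite ?Us_dim // -lt0n d_gt0 mul1n.
rewrite (eq_bigr _ (fun i _ => Us_count i)) -big_distrl /= mulnCA -mulnDr.
move/eqP; rewrite eqn_pmul2l // eq_sym => /eqP wtE.
exists (\sum_i (#|[set v in Us i | f v != 0%R]| != 0%N))%N => //.
apply: (@leq_trans (\sum_(i < h) 1)%N); first by apply: leq_sum => i _; apply: leq_b1.
by rewrite sum_nat_const card_ord muln1.
Qed.

Lemma wt_rep_matrix_gt0 (x : 'rV[F]_k) : (0 < u)%N ->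
  (h * (#|F| ^ u - 1) < #|F| ^ k - #|F| ^ k.-1)%N -> x != 0 ->
  (0 < wt (x *m G))%N.
Proof.
move=> u_gt0 hbound /wt_rep_matrix[m le_mh wtE].
have := ltn_mul_expn_pred u_gt0 le_mh hbound.
by rewrite -wtE -{1}[(m * _)%N]add0n ltn_add2r.
Qed.

End RepresentativeMatrix.
End DisjointSubspaces.

Theorem theorem2p1 (F : finFieldType) (k u h : nat)
  (Us : 'I_h -> {vspace 'rV[F]_k})
  (hk : (3 <= k)%N) (hu : (2 <= u)%N) (hh : (1 <= h)%N)
  (hdim : forall i, \dim (Us i) = u)
  (hdisj : forall i j, i != j -> (Us i :&: Us j)%VS = 0%VS)
  (hbound : (h * (#|F| ^ u - 1) < #|F| ^ k - #|F| ^ k.-1)%N)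
  (n : nat) (G : 'M[F]_(k, n)) (hG : rep_matrix Us G) :
  [/\ n = (((#|F| ^ k - 1) - h * (#|F| ^ u - 1)) %/ (#|F| - 1))%N,
      \rank G = k,
      (forall x : 'rV[F]_k, x *m G != (0%R : 'rV[F]_n) ->
         (#|F| ^ k.-1 - h * #|F| ^ u.-1 <= wt (x *m G))%N)
    & (size (undup [seq wt (x *m G) | x <- enum 'rV[F]_k & x *m G != (0%R : 'rV[F]_n)])
         <= h.+1)%N].
Proof.
have q1_gt0 : (0 < #|F| - 1)%N by rewrite subn_gt0 finNzRing_gt1.
have u_gt0 : (0 < u)%N by apply: leq_trans hu.
have wt_gt0 := wt_rep_matrix_gt0 hdisj hG hdim u_gt0 hbound.
have wtE := wt_rep_matrix hdisj hG hdim.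
have codeword_neq0 x : x *m G != 0 -> x != 0.
  by apply: contraNneq => ->; rewrite mul0mx.
split.
- by rewrite !subn1 (rep_matrix_length hdisj hG hdim) addnK mulKn // -subn1.
- apply/eqP/inj_row_free => x xG0; have [// | x_neq0] := eqVneq x 0.
  by have := wt_gt0 x x_neq0; rewrite xG0 wt0.
- move=> x /codeword_neq0/wtE[m le_mh <-].
  by rewrite leq_subLR addnC leq_add2r leq_mul2r le_mh orbT.
- apply: (@leq_trans (size [seq (#|F| ^ k.-1 - m * #|F| ^ u.-1)%N | m <- iota 0 h.+1]));
    last by rewrite size_map size_iota.
  apply: uniq_leq_size; first exact: undup_uniq.
  move=> w; rewrite mem_undup => /mapP[x].
  rewrite mem_filter => /andP[/codeword_neq0 x_neq0 _] ->.
  have [m le_mh <-] := wtE x x_neq0.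
  by apply/mapP; exists m; rewrite ?addnK // mem_iota ltnS.
Qed.
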